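(* Let $k\ge2$ and let $g_1,g_2$ be densities on $(0,1)$ of the form $g_i(x)=\sum_{j=0}^{k-1}\beta_{i,j}\psi_{j+1}(x,1)+\beta_{i,k}\int_{(0,1)}\psi_k(x,\theta)\,dQ_i(\theta)$, $i=1,2$, with $(\beta_{i,0},\ldots,\beta_{i,k})\in\Delta_{k+1}$ and $Q_i$ probability measures on $(0,1)$. Set $\alpha_i=\beta_{i,0}$. Then $$|\alpha_1-\alpha_2|\le\sqrt{6\,\|g_1-g_2\|_1}.$$
   Context: $\psi_k(x,\theta)=\frac{k}{\theta}(1-\frac{x}{\theta})_+^{k-1}$ for $x,\theta>0$; in particular $\psi_1(\cdot,1)\equiv1$ on $(0,1)$. $\Delta_J=\{(w_1,\ldots,w_J)\in[0,1]^J:\sum_iw_i=1\}$. $\|\cdot\|_1$ is the $\mathbb{L}_1(0,1)$ norm. *)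

From HB Require Import structures.
From mathcomp Require Import all_boot all_order all_algebra.
From mathcomp Require Import all_classical all_reals all_analysis.
Set Implicit Arguments. Unset Strict Implicit. Unset Printing Implicit Defensive.
Import Order.TTheory GRing.Theory Num.Theory.
Local Open Scope classical_set_scope.
Local Open Scope ring_scope.

Definition psi (R : realType) (k : nat) (x theta : R) : R :=
  k%:R / theta * (Num.max 0 (1 - x / theta)) ^+ k.-1.

Definition simplex (R : realType) (k : nat) (beta : 'I_k.+1 -> R) : Prop :=
  (forall j, 0 <= beta j) /\ \sum_(j < k.+1) beta j = 1.

(* The integral is finite for x in (0,1) (psi_k(x,.) vanishes on (0,x] and is
   bounded by k/x on (x,1)), so we take its real value with fine. *)
Definition gmix (R : realType) (k : nat) (beta : 'I_k.+1 -> R)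
  (Q : probability R R) (x : R) : R :=
  \sum_(j < k) beta (widen_ord (leqnSn k) j) * psi j.+1 x 1
  + beta ord_max * fine (\int[Q]_(t in `]0%R, 1%R[) (psi k x t)%:E)%E.

Definition L1norm01 (R : realType) (f : R -> R) : \bar R :=
  (\int[lebesgue_measure]_(x in `]0%R, 1%R[) (`|f x|)%:E)%E.

From HB Require Import structures.
From mathcomp Require Import all_boot all_order all_algebra.
From mathcomp Require Import all_classical all_reals all_analysis.
From mathcomp Require Import ring lra zify measurable_realfun.
Set Implicit Arguments. Unset Strict Implicit. Unset Printing Implicit Defensive.
Import Order.TTheory GRing.Theory Num.Theory.
Import numFieldNormedType.Exports.
Local Open Scope classical_set_scope.
Local Open Scope ring_scope.

(* Since every [psi_k(., theta)] is nonnegative and [psi_1(., 1) = 1], each density satisfies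
   [g_i >= alpha_i]; conversely every kernel [psi_j(x, theta)] with [j >= 2] and [theta <= 1]
   is at most [2 (1/x - 1)], so [g_i(x) <= alpha_i + 2 (1/x - 1)].  Hence with
   [d = |alpha_1 - alpha_2|] we get [|g_1 - g_2|(x) >= d - 3 (1 - x)] for [x >= 2/3], and
   integrating this affine minorant over [[1 - d/3, 1]] gives [||g_1 - g_2||_1 >= d^2 / 6].
   The norm is finite because, by Tonelli, the mixture part integrates to at most [k]. *)

(* No measurability is needed: the integral of a nonnegative function is the supremum of
   the integrals of the simple functions below it. *)
Lemma ge0_le_integral_nomeas d (T : measurableType d) (R : realType)
    (mu : {measure set T -> \bar R}) (D : set T) (f1 f2 : T -> \bar R) :
  (forall x, D x -> (0 <= f1 x)%E) -> (forall x, D x -> (f1 x <= f2 x)%E) ->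
  (\int[mu]_(x in D) f1 x <= \int[mu]_(x in D) f2 x)%E.
Proof.
move=> f10 f12.
have f20 x : D x -> (0 <= f2 x)%E by move=> Dx; exact: le_trans (f10 _ Dx) (f12 _ Dx).
rewrite (ge0_integralE mu f10) (ge0_integralE mu f20).
apply: ereal_sup_le => _ /= [h hf <-]; exists h => //= x.
apply: le_trans (hf x) _; rewrite /patch; case: ifP => // /set_mem; exact: f12.
Qed.

Lemma mulrn_exprn_subr_le {R : realFieldType} (u : R) n : 0 <= u -> u <= 1 ->
  n.+1%:R * u ^+ n * (1 - u) <= 1 - u ^+ n.+1.
Proof.
move=> u0 u1; elim: n => [|n IH]; first by rewrite expr0 expr1 !mul1r.
have un0 : 0 <= u ^+ n.+1 by exact: exprn_ge0.
have un1 : u ^+ n.+1 <= 1 by exact: exprn_ile1.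
have unSE : n.+2%:R * u ^+ n.+1 * (1 - u) =
    u * (n.+1%:R * u ^+ n * (1 - u)) + u ^+ n.+1 * (1 - u).
  by rewrite -(natr1 n.+1) exprS; ring.
rewrite unSE [u ^+ n.+2]exprS; nra.
Qed.

Section psi_bounds.
Variable R : realType.
Implicit Types (k : nat) (x t : R).

Lemma psi_ge0 k x t : 0 <= t -> 0 <= psi k x t.
Proof.
move=> t0; apply: mulr_ge0; first exact: divr_ge0.
by apply: exprn_ge0; rewrite le_max lexx.
Qed.

Lemma psi1E x : psi 1 x 1 = 1.
Proof. by rewrite /psi expr0 divr1 mulr1. Qed.

Lemma psi_eq0 k x t : (1 < k)%N -> 0 < t -> t <= x -> psi k x t = 0.
Proof.
move=> k1 t0 tx; rewrite /psi.
have -> : Num.max 0 (1 - x / t) = 0.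
  by apply/max_idPl; rewrite subr_le0 ler_pdivlMr // mul1r.
by case: k k1 => [|[|k]] //= _; rewrite expr0n /= mulr0.
Qed.

Lemma psi_le_div k x t : 0 <= x -> 0 < t -> psi k x t <= k%:R / t.
Proof.
move=> x0 t0; rewrite /psi -[leRHS]mulr1; apply: ler_wpM2l.
  by rewrite divr_ge0 // ltW.
apply: exprn_ile1; first by rewrite le_max lexx.
have : 0 <= x / t by rewrite divr_ge0 // ltW.
by rewrite ge_max ler01; lra.
Qed.

(* With [s = x / t] the kernel reads [(k s (1 - s)^(k-2)) (1 - s) / x]; the first factor is
   at most [2] and [1 - s <= 1 - x] because [t <= 1]. *)
Lemma psi_le_inv k x t : (1 < k)%N -> 0 < x -> x < 1 -> 0 < t -> t <= 1 ->
  psi k x t <= 2 * (x^-1 - 1).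
Proof.
move=> k1 x0 x1 t0 t1.
have bound0 : 0 <= 2 * (x^-1 - 1) by rewrite mulr_ge0 // subr_ge0 invf_ge1 // ltW.
have [xt|tx] := ltP x t; last by rewrite psi_eq0.
case: k k1 => [|[|m]] // _.
set s := x / t.
have s0 : 0 <= s by rewrite divr_ge0 // ltW.
have s1 : s <= 1 by rewrite ler_pdivrMr // mul1r ltW.
have xs : x <= s by rewrite ler_pdivlMr // ler_piMr // ltW.
have u0 : 0 <= 1 - s by rewrite subr_ge0.
have ms : m.+2%:R * s * (1 - s) ^+ m <= 2.
  have u1 : 1 - s <= 1 by rewrite lerBlDr lerDl.
  have := @mulrn_exprn_subr_le _ _ m u0 u1.
  have : m.+2%:R <= 2 * m.+1%:R :> R by rewrite -natrM ler_nat; lia.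
  have := exprn_ge0 m u0; have := exprn_ge0 m.+1 u0.
  have -> : 1 - (1 - s) = s by ring.
  nra.
have sx : (1 - s) / x <= x^-1 - 1.
  have -> : x^-1 - 1 = (1 - x) / x by field; rewrite gt_eqF.
  by apply: ler_wpM2r; [rewrite invr_ge0 ltW | lra].
rewrite /psi -/s (max_idPr u0).
have -> : m.+2%:R / t * (1 - s) ^+ m.+1 = (m.+2%:R * s * (1 - s) ^+ m) * ((1 - s) / x).
  by rewrite /s exprS; field; rewrite !gt_eqF.
apply: ler_pM => //; last by rewrite divr_ge0 // ltW.
by apply: mulr_ge0; [apply: mulr_ge0 | exact: exprn_ge0].
Qed.
End psi_bounds.

Section mixture.
Variable R : realType.
Local Notation I := (`]0%R, 1%R[%classic : set R).
Implicit Types (k : nat) (Q : probability R R) (x : R).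

Definition psi_mix k (Q : probability R R) (x : R) : \bar R :=
  (\int[Q]_(t in I) (psi k x t)%:E)%E.

Lemma psi_mix_ge0 k Q x : (0 <= psi_mix k Q x)%E.
Proof.
apply: integral_ge0 => t; rewrite /= in_itv /= => /andP[t0 _].
by rewrite lee_fin psi_ge0 // ltW.
Qed.

Lemma psi_mix_le k Q x : (1 < k)%N -> Q I = 1%E -> 0 < x -> x < 1 ->
  (psi_mix k Q x <= (2 * (x^-1 - 1))%:E)%E.
Proof.
move=> k1 QI x0 x1.
apply: le_trans (_ : \int[Q]_(t in I) (cst (2 * (x^-1 - 1))%:E) t <= _)%E.
  apply: ge0_le_integral_nomeas => t; rewrite /= in_itv /= => /andP[t0 t1].
    by rewrite lee_fin psi_ge0 // ltW.
  by rewrite lee_fin psi_le_inv // ltW.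
by rewrite integral_cst //= QI mule1.
Qed.

Lemma psi_mix_fin_num k Q x : (1 < k)%N -> Q I = 1%E -> 0 < x -> x < 1 ->
  psi_mix k Q x \is a fin_num.
Proof.
move=> k1 QI x0 x1; rewrite ge0_fin_numE ?psi_mix_ge0 //.
exact: le_lt_trans (psi_mix_le k1 QI x0 x1) (ltry _).
Qed.

Lemma gmixE k beta Q x : gmix beta Q x =
  \sum_(j < k) beta (widen_ord (leqnSn k) j) * psi j.+1 x 1
  + beta ord_max * fine (psi_mix k Q x).
Proof. by []. Qed.

End mixture.

Section simplex.
Variables (R : realType) (k : nat) (beta : 'I_k.+1 -> R).
Hypothesis hb : simplex beta.

Lemma simplex_ge0 j : 0 <= beta j.
Proof. by case: hb. Qed.

Lemma simplex_le1 j : beta j <= 1.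
Proof.
case: hb => b0 <-; rewrite (bigD1 j) //= lerDl.
by apply: sumr_ge0 => i _; exact: b0.
Qed.

Lemma simplex_sum_widen :
  \sum_(j < k) beta (widen_ord (leqnSn k) j) + beta ord_max = 1.
Proof. by case: hb => _ <-; rewrite big_ord_recr. Qed.

End simplex.

Lemma simplex_dist_le1 (R : realType) k (beta1 beta2 : 'I_k.+1 -> R) j :
  simplex beta1 -> simplex beta2 -> `|beta1 j - beta2 j| <= 1.
Proof.
move=> hb1 hb2; rewrite ler_norml.
have := simplex_le1 hb1 j; have := simplex_le1 hb2 j.
by have := simplex_ge0 hb1 j; have := simplex_ge0 hb2 j; lra.
Qed.

Section gmix_bounds.
Variables (R : realType) (k : nat) (beta : 'I_k.+1 -> R) (Q : probability R R).
Hypotheses (k1 : (1 < k)%N) (hb : simplex beta).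
Implicit Type x : R.

Let b0 := simplex_ge0 hb.
Let j0 : 'I_k := Ordinal (ltnW k1).
Let widen_j0 : widen_ord (leqnSn k) j0 = ord0. Proof. exact: val_inj. Qed.

Lemma gmix_ge_beta0 x : beta ord0 <= gmix beta Q x.
Proof.
rewrite gmixE (bigD1 j0) //= widen_j0 psi1E mulr1 -addrA lerDl.
apply: addr_ge0; last exact/mulr_ge0/fine_ge0/psi_mix_ge0.
by apply: sumr_ge0 => j _; apply: mulr_ge0 => //; exact: psi_ge0.
Qed.

Lemma gmix_ge0 x : 0 <= gmix beta Q x.
Proof. exact: le_trans (b0 ord0) (gmix_ge_beta0 x). Qed.

Lemma gmix_le_beta0 x : Q `]0%R, 1%R[%classic = 1%E -> 0 < x -> x < 1 ->
  gmix beta Q x <= beta ord0 + 2 * (x^-1 - 1).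
Proof.
move=> hQ x0 x1; set B := 2 * (x^-1 - 1).
have mix_le : fine (psi_mix k Q x) <= B.
  by rewrite -lee_fin fineK ?psi_mix_le ?psi_mix_fin_num.
rewrite gmixE (bigD1 j0) //= widen_j0 psi1E mulr1 -addrA lerD2l.
apply: le_trans (_ : \sum_(j < k | j != j0) beta (widen_ord (leqnSn k) j) * B
   + beta ord_max * B <= _).
  apply: lerD; last exact: ler_wpM2l.
  apply: ler_sum => j jj0; apply: ler_wpM2l => //.
  apply: psi_le_inv => //; rewrite ltnS lt0n.
  by apply: contra jj0 => /eqP j_eq0; apply/eqP/val_inj.
rewrite -big_distrl /= -mulrDl -[leRHS]mul1r; apply: ler_wpM2r.
  exact/(le_trans _ mix_le)/fine_ge0/psi_mix_ge0.
rewrite -(simplex_sum_widen hb) lerD2r [leRHS](bigD1 j0) //= lerDr; exact: b0.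
Qed.

Lemma gmix_le_psi_mix x : 0 <= x -> gmix beta Q x <= k%:R + fine (psi_mix k Q x).
Proof.
move=> x0; have := simplex_sum_widen hb; rewrite gmixE => sum1.
have sum_ge0 : 0 <= \sum_(j < k) beta (widen_ord (leqnSn k) j).
  by apply: sumr_ge0 => j _; exact: b0.
have mix0 := fine_ge0 (psi_mix_ge0 k Q x).
apply: lerD.
  apply: le_trans (_ : \sum_(j < k) beta (widen_ord (leqnSn k) j) * k%:R <= _).
    apply: ler_sum => j _; apply: ler_wpM2l => //.
    apply: le_trans (psi_le_div _ x0 ltr01) _.
    by rewrite divr1 ler_nat ltn_ord.
  rewrite -big_distrl /= -[leRHS]mul1r ler_wpM2r //; have := b0 ord_max; lra.
rewrite -[leRHS]mul1r ler_wpM2r //; lra.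
Qed.

End gmix_bounds.

Lemma measurable_invr (R : realType) : measurable_fun [set: R] (fun t : R => t^-1).
Proof.
rewrite -(setUCr [set 0]); apply/measurable_funU => //; first exact: measurableC.
split; first exact: measurable_fun_set1.
have -> : ~` [set 0] = [set x : R | x != 0].
  by rewrite predeqE => x /=; split => [/eqP|/eqP].
apply: open_continuous_measurable_fun; first exact: open_neq.
by move=> t; rewrite inE; exact: inv_continuous.
Qed.

Section psi_mix_integrable.
Variables (R : realType) (k : nat) (Q : probability R R).
Hypothesis k1 : (1 < k)%N.
Local Notation I := (`]0%R, 1%R[%classic : set R).
Local Notation leb := (@lebesgue_measure R).

Let phi (z : R * R) : R := \1_(I `*` I) z * psi k z.1 z.2.

Let phi_ge0 z : (0 <= (phi z)%:E)%E.
Proof.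
rewrite lee_fin /phi indicE; case: (boolP (z \in _)) => [|_]; last by rewrite mul0r.
rewrite in_setX => /andP[_]; rewrite inE /= in_itv /= => /andP[t0 _].
by rewrite mul1r psi_ge0 // ltW.
Qed.

Let measurable_phi : measurable_fun [set: R * R] (fun z => (phi z)%:E).
Proof.
apply/measurable_EFinP; rewrite /phi /psi.
apply: measurable_funM; first by apply: measurable_indic; exact: measurableX.
apply: measurable_funM.
  apply: measurable_funM => //.
  exact: measurableT_comp (@measurable_invr R) measurable_snd.
apply: measurable_funX; apply: measurable_maxr => //.
apply: measurable_funB => //; apply: measurable_funM => //.
exact: measurableT_comp (@measurable_invr R) measurable_snd.
Qed.

Let phi_section_t x : I x -> (\int[Q]_t (phi (x, t))%:E = psi_mix k Q x)%E.
Proof.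
move=> Ix; rewrite [RHS]integral_mkcond; apply: eq_integral => t _.
rewrite /patch /phi indicE in_setX /= (mem_set Ix).
by case: ifP => _; rewrite ?mul1r ?mul0r.
Qed.

(* For [t] in [(0,1)] the kernel [psi k . t] vanishes beyond [t] and is at most [k / t]. *)
Let phi_section_x_le t : (\int[leb]_x (phi (x, t))%:E <= k%:R%:E)%E.
Proof.
have [It|nIt] := boolP (t \in I); last first.
  rewrite (@eq_integral _ _ _ _ _ (cst 0%E)) ?integral0 // => x _.
  by rewrite /phi indicE in_setX /= (negbTE nIt) andbF mul0r.
move: (It); rewrite inE /= in_itv /= => /andP[t0 t1].
apply: le_trans (_ : \int[leb]_(x in `]0%R, t[) (cst (k%:R / t)%:E) x <= _)%E; last first.
  rewrite integral_cst //= lebesgue_measure_itv /= lte_fin t0 sube0 -EFinM lee_fin.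
  by rewrite mulfVK // gt_eqF.
rewrite [leRHS]integral_mkcond.
apply: ge0_le_integral_nomeas => x _; first exact: phi_ge0.
rewrite /patch /phi indicE in_setX It andbT /=; case: ifPn => [|x_notin].
  rewrite inE /= in_itv /= => /andP[x0 xt].
  case: (x \in I); rewrite ?mul1r ?mul0r lee_fin; first exact: psi_le_div (ltW x0) t0.
  by rewrite divr_ge0 // ltW.
case: (boolP (x \in I)) => [|_]; last by rewrite mul0r.
rewrite inE /= in_itv /= => /andP[x0 _]; rewrite psi_eq0 ?mulr0 //.
by rewrite leNgt; apply: contra x_notin => xt; rewrite inE /= in_itv /= x0.
Qed.

Lemma measurable_psi_mix : measurable_fun I (psi_mix k Q).
Proof.
have mF := @measurable_fun_fubini_tonelli_F _ _ _ _ _ Q _ measurable_phi phi_ge0.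
move: (measurable_funTS (D := I) mF); apply: eq_measurable_fun.
by move=> x /set_mem; exact: phi_section_t.
Qed.

Lemma integral_psi_mix_le : (\int[leb]_(x in I) psi_mix k Q x <= k%:R%:E)%E.
Proof.
have -> : (\int[leb]_(x in I) psi_mix k Q x =
           \int[leb]_(x in I) \int[Q]_t (phi (x, t))%:E)%E.
  by apply: eq_integral => x /set_mem Ix; rewrite phi_section_t.
apply: le_trans (_ : \int[leb]_x \int[Q]_t (phi (x, t))%:E <= _)%E.
  apply: ge0_subset_integral => //; last by move=> x _; exact: integral_ge0.
  exact: (@measurable_fun_fubini_tonelli_F _ _ _ _ _ Q _ measurable_phi phi_ge0).
rewrite (@fubini_tonelli _ _ _ _ _ leb Q _ measurable_phi phi_ge0) /=.
apply: le_trans (_ : \int[Q]_t (cst k%:R%:E) t <= _)%E.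
  apply: ge0_le_integral_nomeas => t _; last exact: phi_section_x_le.
  by apply: integral_ge0.
by rewrite integral_cst //= probability_setT mule1.
Qed.

End psi_mix_integrable.

Section L1norm01_bounds.
Variable R : realType.
Local Notation I := (`]0%R, 1%R[%classic : set R).
Local Notation leb := (@lebesgue_measure R).

Lemma L1norm01_le (f : R -> R) (c : R) (F1 F2 : R -> \bar R) :
  measurable_fun I F1 -> measurable_fun I F2 ->
  (forall x, I x -> (0 <= F1 x)%E) -> (forall x, I x -> (0 <= F2 x)%E) -> 0 <= c ->
  (forall x, I x -> ((`|f x|)%:E <= c%:E + F1 x + F2 x)%E) ->
  (L1norm01 f <= c%:E + \int[leb]_(x in I) F1 x + \int[leb]_(x in I) F2 x)%E.
Proof.
move=> mF1 mF2 F10 F20 c0 f_le.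
have mI : measurable I by exact: measurable_itv.
apply: le_trans (_ : \int[leb]_(x in I) (c%:E + F1 x + F2 x) <= _)%E.
  by apply: ge0_le_integral_nomeas => x Ix; [rewrite lee_fin | exact: f_le].
rewrite ge0_integralD //; last 2 first.
- by move=> x Ix; rewrite adde_ge0 ?lee_fin ?F10.
- exact: emeasurable_funD.
rewrite ge0_integralD // ?lee_fin // integral_cst //=.
by rewrite lebesgue_measure_itv /= lte01 sube0 mule1.
Qed.

Lemma integral_affine_tail (d : R) : 0 < d ->
  (\int[leb]_(x in `[(1 - d / 3)%R, 1%R]) (3 * x + d - 3)%R%:E = (d ^+ 2 / 6)%R%:E)%E.
Proof.
move=> d0.
pose q : {poly R} := 3%:P * 'X + (d - 3)%:P.
pose p : {poly R} := (3 / 2)%:P * 'X ^+ 2 + (d - 3)%:P * 'X.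
have ab : 1 - d / 3 < 1 by rewrite ltrBlDr ltrDl divr_gt0.
have -> : (\int[leb]_(x in `[(1 - d / 3)%R, 1%R]) (3 * x + d - 3)%R%:E =
    \int[leb]_(x in `[(1 - d / 3)%R, 1%R]) q.[x]%R%:E)%E.
  by apply: eq_integral => x _; rewrite /q !(hornerD, hornerM, hornerC, hornerX) addrA.
rewrite (@continuous_FTC2 R (horner q) (horner p)) //.
- by congr (_%:E); rewrite /p !(hornerD, hornerM, hornerC, hornerX, hornerXn); field.
- by apply: continuous_subspaceT => x; exact: continuous_horner.
- split.
  + by move=> x _; exact: derivable_horner.
  + by apply: cvg_at_right_filter; exact: continuous_horner.
  + by apply: cvg_at_left_filter; exact: continuous_horner.
- move=> x _; rewrite -derivE /p /q.
  rewrite !(derivD, derivM, derivC, derivX, derivXn).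
  by rewrite !(mul0r, mul1r, mulr1, add0r, hornerD, hornerM, hornerC, hornerX); field.
Qed.

Lemma L1norm01_ge (f : R -> R) (d : R) : 0 < d -> d <= 1 ->
  (forall x, 1 - d / 3 <= x -> x < 1 -> 3 * x + d - 3 <= `|f x|) ->
  ((d ^+ 2 / 6)%R%:E <= L1norm01 f)%E.
Proof.
move=> d0 d1 f_ge.
have d3 : 0 < 1 - d / 3 by rewrite subr_gt0 ltr_pdivrMr //; lra.
rewrite -integral_affine_tail // -integral_itv_bndo_bndc; last first.
  by apply/measurable_EFinP; apply: measurable_funB => //; exact: measurable_funD.
rewrite integral_mkcond [leRHS]integral_mkcond /patch.
apply: ge0_le_integral_nomeas => x _.
  case: ifPn => // /set_mem; rewrite /= in_itv /= => /andP[ax x1].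
  by rewrite lee_fin; lra.
case: ifPn => [/set_mem|_]; last by case: ifP; rewrite lee_fin.
rewrite /= in_itv /= => /andP[ax x1].
rewrite ifT ?lee_fin; first exact: f_ge.
by apply/mem_set; rewrite /= in_itv /= x1 andbT (lt_le_trans d3).
Qed.

End L1norm01_bounds.

Section two_mixtures.
Variables (R : realType) (k : nat) (beta1 beta2 : 'I_k.+1 -> R).
Variables (Q1 Q2 : probability R R).
Hypotheses (k1 : (1 < k)%N) (hb1 : simplex beta1) (hb2 : simplex beta2).
Hypotheses (hQ1 : Q1 `]0%R, 1%R[%classic = 1%E) (hQ2 : Q2 `]0%R, 1%R[%classic = 1%E).
Local Notation I := (`]0%R, 1%R[%classic : set R).
Local Notation G := (fun x => gmix beta1 Q1 x - gmix beta2 Q2 x).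

Lemma L1norm01_gmix_fin_num : L1norm01 G \is a fin_num.
Proof.
have L0 : (0 <= L1norm01 G)%E by apply: integral_ge0 => x _; rewrite lee_fin.
have L_le : (L1norm01 G <= (2 * k%:R)%:E
    + \int[lebesgue_measure]_(x in I) psi_mix k Q1 x
    + \int[lebesgue_measure]_(x in I) psi_mix k Q2 x)%E.
  apply: L1norm01_le (measurable_psi_mix k Q1) (measurable_psi_mix k Q2) _ _ _ _.
  - by move=> x _; exact: psi_mix_ge0.
  - by move=> x _; exact: psi_mix_ge0.
  - by rewrite mulr_ge0.
  move=> x; rewrite /= in_itv /= => /andP[x0 x1].
  rewrite -(fineK (psi_mix_fin_num k1 hQ1 x0 x1)) -(fineK (psi_mix_fin_num k1 hQ2 x0 x1)).
  rewrite -!EFinD lee_fin.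
  have := gmix_ge0 Q1 k1 hb1 x; have := gmix_ge0 Q2 k1 hb2 x.
  have := gmix_le_psi_mix Q1 hb1 (ltW x0); have := gmix_le_psi_mix Q2 hb2 (ltW x0).
  by rewrite ler_norml => *; apply/andP; split; lra.
rewrite ge0_fin_numE //; apply: le_lt_trans L_le _.
by rewrite (le_lt_trans _ (ltry (2 * k%:R + k%:R + k%:R))) // !EFinD !leeD ?integral_psi_mix_le.
Qed.

Lemma gmix_dist_ge (x : R) :
  1 - `|beta1 ord0 - beta2 ord0| / 3 <= x -> x < 1 ->
  3 * x + `|beta1 ord0 - beta2 ord0| - 3 <= `|G x|.
Proof.
set d := `|_ - _|; move=> ax x1.
have d1 : d <= 1 by exact: simplex_dist_le1.
have x23 : 2 / 3 <= x.
  have : d / 3 <= 1 / 3 by rewrite ler_pM2r.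
  lra.
have x0 : 0 < x by lra.
have inv_le : 2 * (x^-1 - 1) <= 3 * (1 - x).
  have invx : x^-1 <= 3 / 2 by rewrite -div1r ler_pdivrMr //; lra.
  have -> : x^-1 - 1 = (1 - x) * x^-1 by field; rewrite gt_eqF.
  have : 0 <= 1 - x by lra.
  nra.
have := gmix_ge_beta0 Q1 k1 hb1 x; have := gmix_ge_beta0 Q2 k1 hb2 x.
have := gmix_le_beta0 k1 hb1 hQ1 x0 x1; have := gmix_le_beta0 k1 hb2 hQ2 x0 x1.
move: ax; rewrite /d; case: (lerP 0 (beta1 ord0 - beta2 ord0)) => [h|h].
  by rewrite (ger0_norm h) ler_normr => *; apply/orP; left; lra.
by rewrite (ltr0_norm h) ler_normr => *; apply/orP; right; lra.
Qed.

End two_mixtures.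

Theorem mainTheorem9 (R : realType) (k : nat) (hk : (2 <= k)%N)
  (beta1 beta2 : 'I_k.+1 -> R) (Q1 Q2 : probability R R)
  (hb1 : simplex beta1) (hb2 : simplex beta2)
  (hQ1 : Q1 `]0%R, 1%R[%classic = 1%E) (hQ2 : Q2 `]0%R, 1%R[%classic = 1%E) :
  `|beta1 ord0 - beta2 ord0| <=
    Num.sqrt (6 * fine (L1norm01 (fun x => gmix beta1 Q1 x - gmix beta2 Q2 x))).
Proof.
set L := L1norm01 _; set d := `|_|.
have [->|d_neq0] := eqVneq d 0; first exact: sqrtr_ge0.
have d_gt0 : 0 < d by rewrite lt0r d_neq0 normr_ge0.
have d_le1 : d <= 1 by exact: simplex_dist_le1.
have := L1norm01_ge d_gt0 d_le1 (gmix_dist_ge hk hb1 hb2 hQ1 hQ2).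
rewrite -(fineK (L1norm01_gmix_fin_num hk hb1 hb2 hQ1 hQ2)) lee_fin -/L => L_ge.
rewrite -(ger0_norm (ltW d_gt0)) -sqrtr_sqr ler_sqrt; first lra.
by rewrite mulr_ge0 // fine_ge0 // integral_ge0 // => x _; rewrite lee_fin.
Qed.
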